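(* Let $\mathbf{x}\in\mathcal{P}$ and consider the scaled-down notification policy run with ex ante solution $\mathbf{x}$. Under the index-based priority scheme, for every volunteer $v\in[V]$, the expected number of tasks completed by $v$ is at least $\frac{1}{2-q}f_v(\mathbf{x})$, where $f_v(\mathbf{x})=\sum_{t=1}^T\sum_{s=1}^S\lambda_{s,t}\big(\prod_{u<v}(1-p_{u,s}x_{u,s,t})\big)p_{v,s}x_{v,s,t}$ and $q$ is the minimum discrete hazard rate of $g$.
   Context: Online volunteer notification problem. An instance consists of volunteers $[V]$, task types $[S]$, horizon $T$, arrival probabilities $\lambda_{s,t}\ge0$ with $\sum_s\lambda_{s,t}\le1$, match probabilities $p_{v,s}\in[0,1]$, and a probability mass function $g$ on the positive integers with CDF $G(\tau)=\sum_{i\le\tau}g(i)$, $G(0)=0$. In each period $t$ at most one task arrives, of type $s$ with probability $\lambda_{s,t}$, independently across periods. All volunteers start active. Upon an arrival the platform notifies a subset of volunteers; each notified active volunteer $v$ responds positively independently with probability $p_{v,s}$. A volunteer active and notified at time $t$ becomes inactive (regardless of response) and active again at $t+Z$, $Z\sim g$ independent; inactive volunteers ignore notifications and are unaffected by them. Index-based priority scheme: if several notified active volunteers respond positively, the one with smallest index completes the task. MDHR: $q=\min_{\tau\in\mathbb{N}}\frac{g(\tau)}{1-G(\tau-1)}$ (with $\frac00:=1$). $\mathcal{P}$: set of $\mathbf{x}\in\mathbb{R}^{V\times S\times T}$ with $0\le x_{v,s,t}\le1$ and $\sum_{\tau=1}^t\sum_{s}\lambda_{s,\tau}x_{v,s,\tau}(1-G(t-\tau))\le1$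 for all $v,t$. SDN policy with ex ante solution $\mathbf{x}$: $\beta_{v,1}=1$, $\beta_{v,t}=1-\sum_{t'=1}^{t-1}\sum_{s=1}^S\lambda_{s,t'}\frac{x_{v,s,t'}}{2-q}(1-G(t-t'))$ for $t\ge2$; when a task of type $s$ arrives at time $t$, each volunteer $v$ is notified independently with probability $\frac{x_{v,s,t}}{(2-q)\beta_{v,t}}$. *)

From HB Require Import structures.
From mathcomp Require Import all_boot all_order all_algebra.
From mathcomp Require Import all_classical all_reals all_analysis.
Set Implicit Arguments. Unset Strict Implicit. Unset Printing Implicit Defensive.
Import Order.TTheory GRing.Theory Num.Theory.
Local Open Scope ring_scope.
Local Open Scope classical_set_scope.

Section Model.
Variable R : realType.

Definition cdf (g : nat -> R) (n : nat) : R := \sum_(1 <= i < n.+1) g i.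

Definition is_pmf_pos (g : nat -> R) : Prop :=
  g 0%N = 0 /\ (forall n, 0 <= g n) /\
  ((fun n : nat => \sum_(0 <= k < n) g k) @ \oo --> (1 : R^o)).

(** discrete hazard rate g(tau)/(1-G(tau-1)), with 0/0 := 1 *)
Definition hazard (g : nat -> R) (tau : nat) : R :=
  let d := 1 - cdf g tau.-1 in if d == 0 then 1 else g tau / d.

Definition mdhr (g : nat -> R) : R :=
  inf [set hazard g tau | tau in [set tau : nat | (0 < tau)%N]].

Variables (V S T : nat) (lam : 'I_S -> nat -> R) (p : 'I_V -> 'I_S -> R)
  (g : nat -> R).

(** Periods are 1..T; types are 'I_S; volunteers are 'I_V (index order = priority). *)
Definition valid_instance : Prop :=
  (forall s t, (1 <= t <= T)%N -> 0 <= lam s t) /\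
  (forall t, (1 <= t <= T)%N -> \sum_(s < S) lam s t <= 1) /\
  (forall v s, 0 <= p v s <= 1) /\
  is_pmf_pos g.

Definition in_P (x : 'I_V -> 'I_S -> nat -> R) : Prop :=
  (forall v s t, (1 <= t <= T)%N -> 0 <= x v s t <= 1) /\
  (forall v t, (1 <= t <= T)%N ->
     \sum_(1 <= tau < t.+1) \sum_(s < S)
        lam s tau * x v s tau * (1 - cdf g (t - tau)) <= 1).

Variable x : 'I_V -> 'I_S -> nat -> R.

Definition beta (v : 'I_V) (t : nat) : R :=
  1 - \sum_(1 <= t' < t) \sum_(s < S)
        lam s t' * (x v s t' / (2 - mdhr g)) * (1 - cdf g (t - t')).

Definition notif_prob (v : 'I_V) (s : 'I_S) (t : nat) : R :=
  x v s t / ((2 - mdhr g) * beta v t).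

Definition bern (a : R) (b : bool) : R := if b then a else 1 - a.

(** Law of the inactivity duration Z, observed up to the horizon when drawn at
    time t: value k in 1..T-t means Z = k; value 0 encodes Z > T - t
    (the volunteer does not become active again before the horizon ends). *)
Definition zweight (t : nat) (k : 'I_T.+1) : R :=
  if val k == 0%N then 1 - cdf g (T - t)
  else if (val k <= T - t)%N then g k else 0.

(** State: r v = period from which volunteer v is active (active at t iff r v <= t).
    Per period, for each volunteer: c v = (notified?, positive response?) and
    z v = inactivity duration, all drawn independently (unused draws are
    irrelevant). *)
Definition step_weight (t : nat) (s : 'I_S)
    (c : {ffun 'I_V -> bool * bool}) (z : {ffun 'I_V -> 'I_T.+1}) : R :=
  \prod_(v < V) (bern (notif_prob v s t) (c v).1 * bern (p v s) (c v).2
                 * zweight t (z v)).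

Definition accepts (r : {ffun 'I_V -> nat}) (t : nat)
    (c : {ffun 'I_V -> bool * bool}) (v : 'I_V) : bool :=
  [&& (r v <= t)%N, (c v).1 & (c v).2].

Definition completes r t c (v0 : 'I_V) : bool :=
  accepts r t c v0 && [forall u : 'I_V, (u < v0)%N ==> ~~ accepts r t c u].

Definition next_state (r : {ffun 'I_V -> nat}) (t : nat)
    (c : {ffun 'I_V -> bool * bool}) (z : {ffun 'I_V -> 'I_T.+1})
    : {ffun 'I_V -> nat} :=
  [ffun v => if (r v <= t)%N && (c v).1
             then (if val (z v) == 0%N then T.+1 else t + val (z v))%N
             else r v].

(** expected number of tasks completed by v0 in periods t, ..., t+n-1,
    starting from state r *)
Fixpoint exp_completed (v0 : 'I_V) (n t : nat) (r : {ffun 'I_V -> nat})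
    {struct n} : R :=
  match n with
  | 0%N => 0
  | n'.+1 =>
      (1 - \sum_(s < S) lam s t) * exp_completed v0 n' t.+1 r
      + \sum_(s < S) lam s t *
          \sum_(c : {ffun 'I_V -> bool * bool})
          \sum_(z : {ffun 'I_V -> 'I_T.+1})
            step_weight t s c z *
            ((completes r t c v0)%:R
             + exp_completed v0 n' t.+1 (next_state r t c z))
  end.

Definition expected_completed (v0 : 'I_V) : R :=
  exp_completed v0 T 1 [ffun => 0%N].

Definition f_obj (v : 'I_V) : R :=
  \sum_(1 <= t < T.+1) \sum_(s < S)
     lam s t * (\prod_(u < V | (u < v)%N) (1 - p u s * x u s t))
     * p v s * x v s t.

End Model.

(* Volunteer [v]'s activity evolves autonomously: it only depends on the
   notifications [v] receives while active and on its own inactivity durations.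
   The events "deactivated at t' < t and still inactive at t" are disjoint, so
   the probability a_t that [v] is active at [t] satisfies the renewal identity
   1 - a_t = sum_{t'<t} a_t' sum_s lam_{s,t'} pi_{v,s,t'} (1 - G(t - t')),
   whose solution is exactly a_t = beta_{v,t} by the SDN normalisation.
   The minimum hazard rate gives 1 - G(tau+1) <= (1 - q)(1 - G(tau)), which
   together with x in P yields beta >= 1/(2-q); hence every notification
   probability pi is at most x.  An active [v] facing a type-s task completes
   it with probability at least pi_v p_v prod_{u<v} (1 - p_u x_u), as each
   volunteer of higher priority accepts with probability at most p_u x_u.
   Summing a_t = beta_{v,t} times this bound, with pi_{v,s,t} beta_{v,t} =
   x_{v,s,t}/(2-q), gives f_v(x)/(2-q). *)

From Pilot Require Import Defs.
From HB Require Import structures.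
From mathcomp Require Import all_boot all_order all_algebra.
From mathcomp Require Import all_classical all_reals all_analysis.
From mathcomp Require Import ring lra zify.
Set Implicit Arguments. Unset Strict Implicit. Unset Printing Implicit Defensive.
Import Order.TTheory GRing.Theory Num.Theory.
Local Open Scope ring_scope.

Section Bigops.
Variable R : comPzRingType.

Lemma sum_pair_bool (F : bool * bool -> R) :
  \sum_(y : bool * bool) F y
  = F (true, true) + F (true, false) + F (false, true) + F (false, false).
Proof.
transitivity (\sum_(y | xpredT y.1 && xpredT y.2) F (y.1, y.2)).
  by apply: eq_bigr => -[].
by rewrite -(pair_big xpredT xpredT (fun a b => F (a, b))) /= !big_bool /= addrA.
Qed.

Lemma sum_ffun_prod (I A B : finType) (f : I -> A -> B -> R) :
  \sum_(c : {ffun I -> A}) \sum_(z : {ffun I -> B}) \prod_i f i (c i) (z i)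
  = \prod_i \sum_a \sum_b f i a b.
Proof.
rewrite bigA_distr_bigA; apply: eq_bigr => c _.
by rewrite bigA_distr_bigA.
Qed.

Lemma prod_ord_split n (v : 'I_n) (A : 'I_n -> R) (B : R) :
  \prod_(u < n) (if (u < v)%N then A u else if u == v then B else 1)
  = (\prod_(u < n | (u < v)%N) A u) * B.
Proof.
rewrite (bigID (fun u : 'I_n => (u < v)%N)) /=; congr (_ * _).
  by apply: eq_bigr => u ->.
by rewrite (bigD1 v) /= ?ltnn // eqxx big1 ?mulr1 // => u /andP[/negbTE -> /negbTE ->].
Qed.

End Bigops.

Lemma sum_bern (R : realType) (a : R) : \sum_(b : bool) bern a b = 1.
Proof. by rewrite big_bool /= addrC subrK. Qed.

Lemma bern_ge0 (R : realType) (a : R) b : 0 <= a <= 1 -> 0 <= bern a b.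
Proof. by case/andP; case: b => //= _; rewrite subr_ge0. Qed.

Section Cdf.
Variables (R : realType) (g : nat -> R).
Hypothesis hg : is_pmf_pos g.

Lemma cdf0 : Defs.cdf g 0 = 0.
Proof. by rewrite /Defs.cdf big_geq. Qed.

Lemma cdfS n : Defs.cdf g n.+1 = Defs.cdf g n + g n.+1.
Proof. by rewrite /Defs.cdf big_nat_recr. Qed.

Lemma cdf_le1 n : Defs.cdf g n <= 1.
Proof.
case: hg => g0 [g_ge0 cvg1].
pose P n := \sum_(0 <= k < n) g k.
have -> : Defs.cdf g n = P n.+1 by rewrite /P big_ltn // g0 add0r.
have P_homo : {homo P : m n / (m <= n)%N >-> m <= n}.
  move=> m k mk; rewrite /P (big_cat_nat (leq0n m) mk) /= lerDl.
  exact: sumr_ge0.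
have cvgP : cvgn P by apply/cvg_ex; exists 1.
by have := nondecreasing_cvgn_le P_homo cvgP n.+1; rewrite (cvg_lim _ cvg1).
Qed.

Lemma hazard_ge0 tau : 0 <= hazard g tau.
Proof.
case: hg => _ [g_ge0 _]; rewrite /hazard; case: ifP => // _.
by rewrite divr_ge0 // subr_ge0 cdf_le1.
Qed.

Lemma mdhr_le_hazard tau : (0 < tau)%N -> mdhr g <= hazard g tau.
Proof.
move=> tau_gt0; apply: ge_inf; last by exists tau.
by exists 0 => _ [t _ <-]; exact: hazard_ge0.
Qed.

Lemma mdhr_le1 : mdhr g <= 1.
Proof.
apply: le_trans (mdhr_le_hazard (isT : 0 < 1)%N) _.
rewrite /hazard /= cdf0 subr0 oner_eq0 divr1.
by have := cdf_le1 1; rewrite cdfS cdf0 add0r.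
Qed.

Lemma survival_contract tau :
  1 - Defs.cdf g tau.+1 <= (1 - mdhr g) * (1 - Defs.cdf g tau).
Proof.
case: hg => _ [g_ge0 _]; have := mdhr_le_hazard (ltn0Sn tau).
rewrite /hazard /= cdfS; case: ifP => [/eqP d0 _|/negbT d_neq0].
  by rewrite d0 mulr0; have := g_ge0 tau.+1; lra.
have d_gt0 : 0 < 1 - Defs.cdf g tau by rewrite lt0r d_neq0 subr_ge0 cdf_le1.
rewrite ler_pdivlMr // => q_le; nra.
Qed.

End Cdf.

Section InactivityLaw.
Variables (R : realType) (T : nat) (g : nat -> R).
Hypothesis hg : is_pmf_pos g.

Lemma zweight_ge0 t (k : 'I_T.+1) : 0 <= zweight g t k.
Proof.
case: hg => _ [g_ge0 _]; rewrite /zweight.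
by case: ifP => _; [rewrite subr_ge0 cdf_le1 | case: ifP].
Qed.

Lemma zweight_tail t d : (d <= T - t)%N ->
  \sum_(k < T.+1) zweight g t k * ((d < k)%N || (val k == 0%N))%:R
  = 1 - Defs.cdf g d.
Proof.
move=> dT; have -> : 1 - Defs.cdf g d
    = 1 - Defs.cdf g (T - t) + \sum_(d.+1 <= k < (T - t).+1) g k.
  by rewrite /Defs.cdf (big_cat_nat (_ : 1 <= d.+1)%N (_ : d.+1 <= (T - t).+1)%N) //=; ring.
rewrite (big_nat_widen _ _ T.+1) ?ltnS ?leq_subr // big_geq_mkord [in RHS]big_mkcond.
rewrite !big_ord_recl /zweight /= mulr1 add0r; congr (_ + _); apply: eq_bigr => i _.
rewrite /bump /= add1n orbF !ltnS.
case: (i < T - t)%N; case: (d <= i)%N; by rewrite /= ?mulr1 ?mulr0 ?mul0r.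
Qed.

Lemma sum_zweight t : \sum_(k < T.+1) zweight g t k = 1.
Proof.
have := zweight_tail (leq0n (T - t)); rewrite cdf0 subr0 => <-.
by apply: eq_bigr => k _; rewrite lt0n orNb mulr1.
Qed.

End InactivityLaw.

Section Instance.
Variables (R : realType) (V S T : nat) (lam : 'I_S -> nat -> R)
  (p : 'I_V -> 'I_S -> R) (g : nat -> R) (x : 'I_V -> 'I_S -> nat -> R).
Hypotheses (hv : valid_instance T lam p g) (hP : in_P T lam g x).

Local Notation G := (Defs.cdf g).
Local Notation q := (mdhr g).
Local Notation beta := (Defs.beta lam g x).
Local Notation pi := (notif_prob lam g x).
Local Notation period t := (1 <= t <= T)%N.

Let hg : is_pmf_pos g := hv.2.2.2.

Lemma lam_ge0 s t : period t -> 0 <= lam s t.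
Proof. exact: hv.1. Qed.

Lemma no_arrival_ge0 t : period t -> 0 <= 1 - \sum_(s < S) lam s t.
Proof. by move=> ht; rewrite subr_ge0; apply: hv.2.1. Qed.

Lemma p_01 u s : 0 <= p u s <= 1.
Proof. exact: hv.2.2.1. Qed.

Lemma x_01 u s t : period t -> 0 <= x u s t <= 1.
Proof. exact: hP.1. Qed.

Lemma subq_gt0 : 0 < 2 - q.
Proof. by have := mdhr_le1 hg; lra. Qed.

Lemma decayed_load_le u t : (t <= T)%N ->
  \sum_(1 <= t' < t.+1) \sum_(s < S)
     lam s t' * x u s t' * (1 - G (t.+1 - t')) <= 1 - q.
Proof.
have q_le1 := mdhr_le1 hg.
case: t => [_|t tT]; first by rewrite big_geq // subr_ge0.
apply: le_trans (_ : _ <= (1 - q) * \sum_(1 <= t' < t.+2) \sum_(s < S)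
    lam s t' * x u s t' * (1 - G (t.+1 - t'))) _.
  rewrite mulr_sumr; apply: ler_sum_nat => t' /andP[t'1 t't].
  rewrite mulr_sumr; apply: ler_sum => s _.
  have ht' : period t' by rewrite t'1 (leq_trans _ tT).
  rewrite mulrCA subSn // ler_wpM2l ?survival_contract //.
  by rewrite mulr_ge0 ?lam_ge0 //; case/andP: (x_01 u s ht').
by rewrite -[leRHS]mulr1 ler_wpM2l ?subr_ge0 // hP.2.
Qed.

Lemma beta_ge_inv u t : period t -> (2 - q)^-1 <= beta u t.
Proof.
case: t => [//|t] /andP[_ tT].
have q2_neq0 : 2 - q != 0 := lt0r_neq0 subq_gt0.
have -> : beta u t.+1 = 1 - (2 - q)^-1 * \sum_(1 <= t' < t.+1) \sum_(s < S)
    lam s t' * x u s t' * (1 - G (t.+1 - t')).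
  rewrite /Defs.beta mulr_sumr; congr (1 - _); apply: eq_bigr => t' _.
  by rewrite mulr_sumr; apply: eq_bigr => s _; rewrite mulrA mulrAC [_ * _^-1]mulrC.
have hB := decayed_load_le u (ltnW tT).
have inv_gt0 : 0 < (2 - q)^-1 by rewrite invr_gt0 subq_gt0.
have := mulVf q2_neq0; nra.
Qed.

Lemma beta_gt0 u t : period t -> 0 < beta u t.
Proof.
by move=> ht; apply: lt_le_trans (beta_ge_inv u ht); rewrite invr_gt0 subq_gt0.
Qed.

Lemma notif_prob_beta u s t : period t -> pi u s t * beta u t = x u s t / (2 - q).
Proof.
move=> ht; rewrite /notif_prob invfM mulrA -[_ * beta u t]mulrA mulVf ?mulr1 //.
exact: lt0r_neq0 (beta_gt0 u ht).
Qed.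

Lemma notif_prob_bound u s t : period t -> 0 <= pi u s t <= x u s t.
Proof.
move=> ht; have /andP[x_ge0 _] := x_01 u s ht.
have d_ge1 : 1 <= (2 - q) * beta u t.
  by rewrite -[leLHS](mulfV (lt0r_neq0 subq_gt0)) ler_wpM2l ?beta_ge_inv ?ltW ?subq_gt0.
rewrite /notif_prob divr_ge0 ?(le_trans ler01 d_ge1) //=.
by rewrite ler_pdivrMr ?(lt_le_trans ltr01 d_ge1) // ler_peMr.
Qed.

Definition coord_weight t s u (y : bool * bool) (k : 'I_T.+1) : R :=
  bern (pi u s t) y.1 * bern (p u s) y.2 * zweight g t k.

Lemma coord_weight_ge0 t s u y k : period t -> 0 <= coord_weight t s u y k.
Proof.
move=> ht; have /andP[pi_ge0 pi_le] := notif_prob_bound u s ht.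
have /andP[_ x_le1] := x_01 u s ht.
rewrite !mulr_ge0 ?bern_ge0 ?p_01 ?zweight_ge0 //.
by rewrite pi_ge0 (le_trans pi_le).
Qed.

Lemma sum_coord_weight_fst t s u (F : bool -> 'I_T.+1 -> R) :
  \sum_(y : bool * bool) \sum_(k < T.+1) coord_weight t s u y k * F y.1 k
  = \sum_(b : bool) \sum_(k < T.+1) bern (pi u s t) b * zweight g t k * F b k.
Proof.
rewrite sum_pair_bool big_bool /= -!big_split /=.
by apply: eq_bigr => k _; rewrite /coord_weight /=; ring.
Qed.

Lemma sum_coord_weight_accept t s u (phi : bool -> R) :
  \sum_(y : bool * bool) \sum_(k < T.+1) coord_weight t s u y k * phi (y.1 && y.2)
  = phi true * (pi u s t * p u s) + phi false * (1 - pi u s t * p u s).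
Proof.
under eq_bigr => y _ do
  rewrite -mulr_suml /coord_weight -mulr_sumr sum_zweight mulr1.
by rewrite sum_pair_bool /=; ring.
Qed.

Lemma sum_step_weight_prod t s (f : 'I_V -> bool * bool -> 'I_T.+1 -> R) :
  \sum_(c : {ffun 'I_V -> bool * bool}) \sum_(z : {ffun 'I_V -> 'I_T.+1})
     step_weight lam p g x t s c z * \prod_(u < V) f u (c u) (z u)
  = \prod_(u < V) \sum_(y : bool * bool) \sum_(k < T.+1)
      coord_weight t s u y k * f u y k.
Proof.
rewrite -sum_ffun_prod; apply: eq_bigr => c _; apply: eq_bigr => z _.
by rewrite -big_split.
Qed.

Lemma step_weight_ge0 t s c (z : {ffun 'I_V -> 'I_T.+1}) :
  period t -> 0 <= step_weight lam p g x t s c z.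
Proof. by move=> ht; apply: prodr_ge0 => u _; apply: coord_weight_ge0. Qed.

Section Volunteer.
Variable v : 'I_V.

Lemma completes_prod r t c :
  ((completes r t c v)%:R : R) = \prod_(u < V)
    (if (u < v)%N then 1 - (accepts r t c u)%:R
     else if u == v then (accepts r t c u)%:R else 1).
Proof.
rewrite (eq_bigr (fun u : 'I_V => if (u < v)%N then 1 - (accepts r t c u)%:R
    else if u == v then (accepts r t c v)%:R else 1)) => [|u _]; last first.
  by case: ifP => // _; case: eqP => // ->.
rewrite prod_ord_split /completes.
case: (boolP [forall u : 'I_V, _]) => [/forallP none_before|].
  rewrite andbT big1 ?mul1r // => u uv.
  by have := none_before u; rewrite uv => /negbTE ->; rewrite subr0.
rewrite andbF => /forallPn[u]; rewrite negb_imply negbK => /andP[uv acc_u].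
by rewrite (bigD1 u) //= acc_u subrr !mul0r.
Qed.

Lemma sum_step_weight_marginal t s (F : bool -> 'I_T.+1 -> R) :
  \sum_(c : {ffun 'I_V -> bool * bool}) \sum_(z : {ffun 'I_V -> 'I_T.+1})
     step_weight lam p g x t s c z * F (c v).1 (z v)
  = \sum_(b : bool) \sum_(k < T.+1) bern (pi v s t) b * zweight g t k * F b k.
Proof.
transitivity (\sum_(c : {ffun 'I_V -> bool * bool}) \sum_(z : {ffun 'I_V -> 'I_T.+1})
    step_weight lam p g x t s c z
    * \prod_(u < V) (if u == v then F (c u).1 (z u) else 1)).
  by apply: eq_bigr => c _; apply: eq_bigr => z _; rewrite -big_mkcond big_pred1_eq.
rewrite (sum_step_weight_prod t s (fun u y k => if u == v then F y.1 k else 1)).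
rewrite (bigD1 v) //= eqxx [X in _ * X]big1 ?mulr1 ?sum_coord_weight_fst //.
move=> u /negbTE ->.
by rewrite (sum_coord_weight_accept t s u (fun=> 1)) !mul1r addrC subrK.
Qed.

Lemma sum_step_weight_completes r t s :
  \sum_(c : {ffun 'I_V -> bool * bool}) \sum_(z : {ffun 'I_V -> 'I_T.+1})
     step_weight lam p g x t s c z * (completes r t c v)%:R
  = (r v <= t)%N%:R * (pi v s t * p v s *
      \prod_(u < V | (u < v)%N) (1 - (r u <= t)%N%:R * (pi u s t * p u s))).
Proof.
under eq_bigr do under eq_bigr do rewrite completes_prod.
rewrite (sum_step_weight_prod t s (fun u y _ =>
  if (u < v)%N then 1 - ((r u <= t)%N && (y.1 && y.2))%:R
  else if u == v then ((r u <= t)%N && (y.1 && y.2))%:R else 1)).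
under eq_bigr => u _ do rewrite (sum_coord_weight_accept t s u (fun b =>
  if (u < v)%N then 1 - ((r u <= t)%N && b)%:R
  else if u == v then ((r u <= t)%N && b)%:R else 1)).
rewrite (eq_bigr (fun u : 'I_V =>
    if (u < v)%N then 1 - (r u <= t)%N%:R * (pi u s t * p u s)
    else if u == v then (r v <= t)%N%:R * (pi v s t * p v s) else 1)).
  by rewrite prod_ord_split; ring.
move=> u _; case: ifP => _; last case: eqP => [->|_].
- by case: (r u <= t)%N; rewrite /=; ring.
- by case: (r v <= t)%N; rewrite /=; ring.
- ring.
Qed.

Definition next_return t rho (b : bool) (k : 'I_T.+1) : nat :=
  if (rho <= t)%N && b then (if val k == 0%N then T.+1 else t + val k)%N else rho.

(* Transition operator of the Markov chain formed by the return time of [v]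
   alone, which does not depend on the other volunteers. *)
Definition vstep t (F : nat -> R) rho : R :=
  (1 - \sum_(s < S) lam s t) * F rho
  + \sum_(s < S) lam s t * \sum_(b : bool) \sum_(k < T.+1)
      bern (pi v s t) b * zweight g t k * F (next_return t rho b k).

Fixpoint active_prob m t rho : R :=
  if m is m'.+1 then vstep t (active_prob m' t.+1) rho else (rho <= t)%N%:R.

Lemma vstep_lin t c F1 F2 rho :
  vstep t (fun r => c * F1 r + F2 r) rho = c * vstep t F1 rho + vstep t F2 rho.
Proof.
rewrite /vstep [in RHS]mulrDr addrACA; congr (_ + _); first ring.
rewrite !mulr_sumr -big_split /=; apply: eq_bigr => s _.
rewrite mulrCA -mulrDr; congr (_ * _).
rewrite mulr_sumr -big_split /=; apply: eq_bigr => b _.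
rewrite mulr_sumr -big_split /=; apply: eq_bigr => k _; ring.
Qed.

Lemma vstep_const t c rho : vstep t (fun=> c) rho = c.
Proof.
have sum_weights s :
    \sum_(b : bool) \sum_(k < T.+1) bern (pi v s t) b * zweight g t k * c = c.
  under eq_bigr do rewrite -mulr_suml -mulr_sumr sum_zweight mulr1.
  by rewrite -mulr_suml sum_bern mul1r.
rewrite /vstep /=; under [X in _ + X]eq_bigr do rewrite sum_weights.
by rewrite -mulr_suml mulrBl mul1r subrK.
Qed.

Lemma vstep_compl t F rho : vstep t (fun r => 1 - F r) rho = 1 - vstep t F rho.
Proof.
have -> : (fun r => 1 - F r) = fun r => -1 * F r + 1.
  by apply/funext => r; rewrite mulN1r addrC.
by rewrite vstep_lin vstep_const mulN1r addrC.
Qed.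

Lemma vstep_sum t m (c : nat -> R) (F : nat -> nat -> R) rho :
  vstep t (fun r => \sum_(j < m) c j * F j r) rho
  = \sum_(j < m) c j * vstep t (F j) rho.
Proof.
elim: m => [|m IH].
  have -> : (fun r => \sum_(j < 0) c j * F j r) = fun=> 0.
    by apply/funext => r; rewrite big_ord0.
  by rewrite vstep_const big_ord0.
have -> : (fun r => \sum_(j < m.+1) c j * F j r)
    = fun r => c m * F m r + \sum_(j < m) c j * F j r.
  by apply/funext => r; rewrite big_ord_recr addrC.
by rewrite vstep_lin IH big_ord_recr addrC.
Qed.

Lemma vstep_inactive t F rho : (t < rho)%N -> vstep t F rho = F rho.
Proof.
move=> t_lt_rho; rewrite -[RHS](vstep_const t (F rho) rho) /vstep /next_return.
by rewrite leqNgt t_lt_rho.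
Qed.

Definition deact_prob t' t : R :=
  \sum_(s < S) lam s t' * pi v s t' * (1 - G (t - t')).

Lemma vstep_survive t t2 rho : (t < t2 <= T)%N ->
  vstep t (fun r => (t2 < r)%N%:R) rho
  = (t2 < rho)%N%:R + (rho <= t)%N%:R * deact_prob t t2.
Proof.
case/andP=> t_lt_t2 t2T; case: (leqP rho t) => [rho_le_t|t_lt_rho]; last first.
  by rewrite vstep_inactive // mul0r addr0.
rewrite /vstep /=.
have t2_ge_rho : (t2 < rho)%N = false.
  by apply/negbTE; rewrite -leqNgt (leq_trans rho_le_t (ltnW _)).
rewrite t2_ge_rho mulr0 !add0r mul1r /deact_prob; apply: eq_bigr => s _.
rewrite -mulrA; congr (_ * _).
rewrite big_bool /= /next_return rho_le_t /= t2_ge_rho.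
rewrite [X in _ + X]big1 ?addr0 => [|k _]; last by rewrite mulr0.
rewrite -(zweight_tail g (_ : t2 - t <= T - t)%N) ?leq_sub2r // mulr_sumr.
apply: eq_bigr => k _; rewrite mulrA; congr (_ * _%:R).
by case: eqP => [->|_] /=; lia.
Qed.

Lemma active_prob_renewal m t rho : (t + m <= T)%N ->
  1 - active_prob m t rho
  = (t + m < rho)%N%:R
    + \sum_(j < m) active_prob j t rho * deact_prob (t + j) (t + m).
Proof.
elim: m t rho => [|m IH] t rho tmT.
  by rewrite big_ord0 addr0 addn0 /= ltnNge; case: (rho <= t)%N; rewrite /= ?subrr ?subr0.
have renew : (fun r => 1 - active_prob m t.+1 r) = fun r => 1 * (t + m.+1 < r)%N%:R
    + \sum_(j < m) deact_prob (t + j.+1) (t + m.+1) * active_prob j t.+1 r.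
  apply/funext => r; rewrite IH ?addSnnS // mul1r; congr (_ + _).
  by apply: eq_bigr => j _; rewrite mulrC !addSnnS.
rewrite /= -vstep_compl renew vstep_lin vstep_survive; last lia.
rewrite (vstep_sum t m (fun j => deact_prob (t + j.+1) (t + m.+1))
                       (fun j => active_prob j t.+1)).
rewrite big_ord_recl /= addn0 mul1r -addrA; congr (_ + (_ + _)).
by apply: eq_bigr => j _; rewrite mulrC add0n /bump add1n.
Qed.

Lemma active_prob_beta m : (m < T)%N -> active_prob m 1 0 = beta v m.+1.
Proof.
elim/ltn_ind: m => m IH mT.
have := active_prob_renewal 0 (_ : 1 + m <= T)%N.
rewrite add1n ltn0 add0r => /(_ mT) renew.
rewrite -[LHS](subKr 1) renew /Defs.beta big_add1 /= big_mkord; congr (1 - _).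
apply: eq_bigr => j _; have jm := ltn_ord j.
have hj : period j.+1 by rewrite /= (ltn_trans jm mT).
rewrite (IH j jm (ltn_trans jm mT)) /deact_prob mulr_sumr; apply: eq_bigr => s _.
by rewrite add1n -(notif_prob_beta v s hj); ring.
Qed.

Definition win_lb s t : R :=
  pi v s t * p v s * \prod_(u < V | (u < v)%N) (1 - p u s * x u s t).

Definition rate_lb t : R := \sum_(s < S) lam s t * win_lb s t.

Definition completed_lb n t rho : R :=
  \sum_(m < n) rate_lb (t + m) * active_prob m t rho.

Lemma completed_lbS n t rho : completed_lb n.+1 t rho
  = rate_lb t * (rho <= t)%N%:R + vstep t (completed_lb n t.+1) rho.
Proof.
rewrite /completed_lb big_ord_recl addn0 /=; congr (_ + _).
rewrite (vstep_sum t n (fun j => rate_lb (t.+1 + j)) (fun j => active_prob j t.+1)).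
by apply: eq_bigr => j _; rewrite /bump add1n addSnnS.
Qed.

Lemma win_lb_le r s t : period t ->
  win_lb s t * (r v <= t)%N%:R <= (r v <= t)%N%:R * (pi v s t * p v s *
    \prod_(u < V | (u < v)%N) (1 - (r u <= t)%N%:R * (pi u s t * p u s))).
Proof.
move=> ht; rewrite mulrC /win_lb; case: (r v <= t)%N; rewrite ?mul0r //= !mul1r.
have /andP[piv_ge0 _] := notif_prob_bound v s ht; have /andP[pv_ge0 _] := p_01 v s.
rewrite ler_wpM2l ?(mulr_ge0 piv_ge0 pv_ge0) //; apply: ler_prod => u _.
have /andP[pi_ge0 pi_le] := notif_prob_bound u s ht; have /andP[_ x_le1] := x_01 u s ht.
have /andP[p_ge0 p_le1] := p_01 u s.
apply/andP; split; first by rewrite subr_ge0; nra.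
by case: (r u <= t)%N; rewrite /= ?mul1r ?mul0r ?subr0; nra.
Qed.

Lemma arrival_step_ge (r : {ffun 'I_V -> nat}) t s (F : nat -> R) : period t ->
  win_lb s t * (r v <= t)%N%:R
  + \sum_(b : bool) \sum_(k < T.+1)
      bern (pi v s t) b * zweight g t k * F (next_return t (r v) b k)
  <= \sum_(c : {ffun 'I_V -> bool * bool}) \sum_(z : {ffun 'I_V -> 'I_T.+1})
       step_weight lam p g x t s c z
       * ((completes r t c v)%:R + F (next_state r t c z v)).
Proof.
move=> ht; have -> : \sum_(c : {ffun 'I_V -> bool * bool}) \sum_(z : {ffun 'I_V -> 'I_T.+1})
    step_weight lam p g x t s c z * ((completes r t c v)%:R + F (next_state r t c z v))
  = \sum_(c : {ffun 'I_V -> bool * bool}) \sum_(z : {ffun 'I_V -> 'I_T.+1})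
      step_weight lam p g x t s c z * (completes r t c v)%:R
  + \sum_(c : {ffun 'I_V -> bool * bool}) \sum_(z : {ffun 'I_V -> 'I_T.+1})
      step_weight lam p g x t s c z * F (next_return t (r v) (c v).1 (z v)).
  rewrite -big_split; apply: eq_bigr => c _; rewrite -big_split; apply: eq_bigr => z _.
  by rewrite ffunE mulrDr.
rewrite sum_step_weight_completes.
rewrite (sum_step_weight_marginal t s (fun b k => F (next_return t (r v) b k))).
by rewrite lerD2r win_lb_le.
Qed.

Lemma completed_lb_le n t (r : {ffun 'I_V -> nat}) : (0 < t)%N -> (t + n <= T.+1)%N ->
  completed_lb n t (r v) <= exp_completed T lam p g x v n t r.
Proof.
elim: n t r => [|n IH] t r t_gt0 tnT; first by rewrite /completed_lb big_ord0.
have ht : period t by rewrite t_gt0 /=; lia.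
have IHt (r' : {ffun 'I_V -> nat}) :
    completed_lb n t.+1 (r' v) <= exp_completed T lam p g x v n t.+1 r'.
  by apply: IH => //; lia.
rewrite completed_lbS /vstep addrCA; apply: lerD.
  by rewrite ler_wpM2l ?no_arrival_ge0.
rewrite /rate_lb mulr_suml -big_split /=; apply: ler_sum => s _.
rewrite -mulrA -mulrDr ler_wpM2l ?lam_ge0 //.
apply: le_trans (arrival_step_ge r s (completed_lb n t.+1) ht) _.
apply: ler_sum => c _; apply: ler_sum => z _.
by rewrite ler_wpM2l ?step_weight_ge0 // lerD2l.
Qed.

Lemma completed_lb_start : (2 - q)^-1 * f_obj T lam p x v = completed_lb T 1 0.
Proof.
rewrite /f_obj /completed_lb big_add1 /= big_mkord mulr_sumr; apply: eq_bigr => m _.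
have hm : period m.+1 by rewrite /= ltn_ord.
rewrite active_prob_beta ?ltn_ord // add1n /rate_lb mulr_suml mulr_sumr.
apply: eq_bigr => s _; rewrite /win_lb.
set P := \prod_(u < V | _) _.
transitivity (lam s m.+1 * p v s * P * (x v s m.+1 / (2 - q))); first ring.
by rewrite -notif_prob_beta //; ring.
Qed.

End Volunteer.

End Instance.

Theorem lemma8 (R : realType) (V S T : nat) (lam : 'I_S -> nat -> R)
  (p : 'I_V -> 'I_S -> R) (g : nat -> R) (x : 'I_V -> 'I_S -> nat -> R) :
  valid_instance T lam p g ->
  in_P T lam g x ->
  forall v : 'I_V,
    (2 - mdhr g)^-1 * f_obj T lam p x v <= expected_completed T lam p g x v.
Proof.
move=> hv hP v; rewrite (completed_lb_start hv hP v).
have := completed_lb_le hv hP v [ffun=> 0%N] (ltn0Sn 0) (leqnn T.+1).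
by rewrite ffunE.
Qed.
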